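(* Let $X,Y$ be sets and let $G\subseteq X\times Y$ be a connected bipartite graph. Let $\mathcal F(G)$ be the set of finite, connected, twin-free induced subgraphs of $G$. If $\mathcal F(G)$ contains only finitely many pairwise non-isomorphic bipartite graphs, then $\operatorname{tf}(G)$ is finite.
   Context: A subset $G\subseteq X\times Y$ is viewed as a bipartite graph with vertex set the disjoint union of $X$ and $Y$ and edge set $G$. For $X_0\subseteq X$, $Y_0\subseteq Y$, the induced subgraph is $G[X_0,Y_0]=G\cap(X_0\times Y_0)$ (with vertex set $X_0\sqcup Y_0$). Two vertices are twins if they have the same set of neighbours; a graph is twin-free if no two distinct vertices are twins. $\operatorname{tf}(G)$ denotes a maximal twin-free induced subgraph of $G$, obtained by choosing one vertex from each twin-equivalence class; it is unique up to isomorphism. Isomorphisms of bipartite graphs are bijections of vertex sets preserving edges and mapping the two sides onto the two sides (possibly swapping them). *)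

(* A bipartite graph G ⊆ X × Y is a relation G : X -> Y -> Prop;
   its vertex set is the disjoint union X + Y. Vertex subsets (induced
   subgraphs G[X0,Y0]) are predicates on X + Y. *)
From Stdlib Require Import List Relations.
Set Implicit Arguments.

Section Defs.
Variables (X Y : Type) (G : X -> Y -> Prop).

Definition adj (u v : X + Y) : Prop :=
  match u, v with
  | inl x, inr y => G x y
  | inr y, inl x => G x y
  | _, _ => False
  end.

Definition restr_adj (S : X + Y -> Prop) (u v : X + Y) : Prop :=
  S u /\ S v /\ adj u v.

Definition connected_on (S : X + Y -> Prop) : Prop :=
  forall u v, S u -> S v -> clos_refl_trans (X + Y) (restr_adj S) u v.

Definition connected : Prop := connected_on (fun _ => True).

Definition twins_in (S : X + Y -> Prop) (u v : X + Y) : Prop :=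
  forall w, S w -> (adj u w <-> adj v w).

Definition twin_free_on (S : X + Y -> Prop) : Prop :=
  forall u v, S u -> S v -> twins_in S u v -> u = v.

Definition finite_set (S : X + Y -> Prop) : Prop :=
  exists l : list (X + Y), forall v, S v -> In v l.

Definition in_F (S : X + Y -> Prop) : Prop :=
  finite_set S /\ connected_on S /\ twin_free_on S.

Definition same_side (u v : X + Y) : Prop :=
  match u, v with
  | inl _, inl _ => True
  | inr _, inr _ => True
  | _, _ => False
  end.

Definition bip_iso (S T : X + Y -> Prop) (f : X + Y -> X + Y) : Prop :=
  (forall v, S v -> T (f v)) /\
  (forall u v, S u -> S v -> f u = f v -> u = v) /\
  (forall w, T w -> exists v, S v /\ f v = w) /\
  (forall u v, S u -> S v -> (adj u v <-> adj (f u) (f v))) /\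
  ((forall v, S v -> same_side v (f v)) \/
   (forall v, S v -> ~ same_side v (f v))).

Definition isomorphic (S T : X + Y -> Prop) : Prop :=
  exists f, bip_iso S T f.

(* S is the vertex set of a tf(G): it contains exactly one vertex from each
   twin-equivalence class of G *)
Definition is_tf_set (S : X + Y -> Prop) : Prop :=
  (forall v, exists u, S u /\ twins_in (fun _ => True) u v) /\
  (forall u v, S u -> S v -> twins_in (fun _ => True) u v -> u = v).

End Defs.

(* If tf(G) were infinite, pick n of its vertices for n larger than every graph
   of the finite list of representatives of F(G). Any two of them are separated
   by some vertex of G; since G is connected, these n vertices together with the
   separating vertices lie in a finite connected induced subgraph H. Keeping one
   vertex from each twin class of H gives a finite, connected, twin-free induced
   subgraph, i.e. a member of F(G), and it still has at least n vertices because
   the separating vertices keep the n chosen ones in different classes. *)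
From Stdlib Require Import List Relations Classical Lia.
Import ListNotations.
Set Implicit Arguments.

Lemma finite_choice_list {A B : Type} (D : A -> B -> Prop) (l : list A) :
  (forall a, In a l -> exists b, D a b) ->
  exists lb, forall a, In a l -> exists b, In b lb /\ D a b.
Proof.
  induction l as [|a l IH]; intros Hex.
  - exists []. intros _ [].
  - destruct (Hex a (or_introl eq_refl)) as [b Hb].
    destruct IH as [lb Hlb]; [intros; apply Hex; right; assumption|].
    exists (b :: lb). intros a' [<-|Ha'].
    + exists b. split; [left|]; auto.
    + destruct (Hlb a' Ha') as [b' [? ?]]. exists b'. split; [right|]; auto.
Qed.

Section Transversal.
Variables (T : Type) (E : relation T).
Hypothesis E_equiv : equivalence T E.

Lemma transversal_exists (l : list T) :
  exists r, incl r l /\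
    (forall x, In x l -> exists y, In y r /\ E x y) /\
    (forall y1 y2, In y1 r -> In y2 r -> E y1 y2 -> y1 = y2).
Proof.
  destruct E_equiv as [Erefl _ Esym].
  induction l as [|a l [r [Hrl [Hrep Huniq]]]].
  - exists []. repeat split; [intros _ []|intros _ []|intros _ _ []].
  - destruct (classic (exists y, In y r /\ E a y)) as [Hcov|Hnew].
    + exists r. split; [apply incl_tl; assumption|split; [|assumption]].
      intros x [<-|Hx]; auto.
    + exists (a :: r). split; [apply incl_cons; [left; reflexivity|apply incl_tl; assumption]|split].
      * intros x [<-|Hx]; [exists a; split; [left; reflexivity|apply Erefl]|].
        destruct (Hrep x Hx) as [y [? ?]]. exists y. split; [right|]; auto.
      * intros y1 y2 [<-|Hy1] [<-|Hy2] E12; auto;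
          exfalso; apply Hnew; eauto.
Qed.

Lemma NoDup_lift_to_transversal (P : T -> Prop) (A : list T) :
  NoDup A ->
  (forall a, In a A -> exists y, P y /\ E a y) ->
  (forall a b, In a A -> In b A -> E a b -> a = b) ->
  exists R, length R = length A /\ NoDup R /\ (forall y, In y R -> P y) /\
    (forall y, In y R -> exists a, In a A /\ E a y).
Proof.
  destruct E_equiv as [_ Etrans Esym].
  induction A as [|a A IH]; intros HnA Hrep Hsep.
  - exists []. repeat split; [constructor|intros _ []|intros _ []].
  - inversion HnA as [|? ? HaA HnA']; subst.
    destruct IH as [R [HlR [HnR [HRP HRA]]]];
      [assumption|intros; apply Hrep; right; assumption|
       intros; apply Hsep; try right; assumption|].
    destruct (Hrep a (or_introl eq_refl)) as [y [Py Eay]].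
    exists (y :: R). split; [simpl; congruence|split; [|split]].
    + constructor; [|assumption]. intros Hy.
      destruct (HRA y Hy) as [a' [Ha' Ea'y]].
      assert (a = a') as <- by (apply Hsep; [left|right|eauto]; auto).
      contradiction.
    + intros z [<-|Hz]; auto.
    + intros z [<-|Hz]; [exists a; split; [left|]; auto|].
      destruct (HRA z Hz) as [a' [? ?]]. exists a'. split; [right|]; auto.
Qed.
End Transversal.

Section Bipartite.
Variables (X Y : Type) (G : X -> Y -> Prop).

Lemma adj_sym (u v : X + Y) : adj G u v -> adj G v u.
Proof. destruct u, v; simpl; auto. Qed.

Lemma restr_adj_rt_mono (S S' : X + Y -> Prop) (u v : X + Y) :
  (forall w, S w -> S' w) ->
  clos_refl_trans _ (restr_adj G S) u v -> clos_refl_trans _ (restr_adj G S') u v.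
Proof.
  intros HSS' Huv; induction Huv as [u v [Su [Sv Huv]]| |].
  - apply rt_step. repeat split; auto.
  - apply rt_refl.
  - eapply rt_trans; eauto.
Qed.

Lemma connected_on_singleton (x : X + Y) : connected_on G (fun v => In v [x]).
Proof.
  intros u v [<-|[]] [<-|[]]. apply rt_refl.
Qed.

Lemma connected_on_app (l1 l2 : list (X + Y)) (x : X + Y) :
  connected_on G (fun v => In v l1) -> connected_on G (fun v => In v l2) ->
  In x l1 -> In x l2 -> connected_on G (fun v => In v (l1 ++ l2)).
Proof.
  intros Hc1 Hc2 Hx1 Hx2.
  set (C := fun v => In v (l1 ++ l2)).
  assert (H1 : forall a b, In a l1 -> In b l1 -> clos_refl_trans _ (restr_adj G C) a b).
  { intros a b Ha Hb. apply restr_adj_rt_mono with (fun v => In v l1); auto.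
    intros w Hw; apply in_or_app; auto. }
  assert (H2 : forall a b, In a l2 -> In b l2 -> clos_refl_trans _ (restr_adj G C) a b).
  { intros a b Ha Hb. apply restr_adj_rt_mono with (fun v => In v l2); auto.
    intros w Hw; apply in_or_app; auto. }
  intros u v Hu Hv.
  apply in_app_or in Hu; apply in_app_or in Hv.
  destruct Hu as [Hu|Hu], Hv as [Hv|Hv]; auto.
  - apply rt_trans with x; auto.
  - apply rt_trans with x; auto.
Qed.

Lemma path_connected_list (u v : X + Y) :
  clos_refl_trans _ (restr_adj G (fun _ => True)) u v ->
  exists l, In u l /\ In v l /\ connected_on G (fun w => In w l).
Proof.
  intros Huv; induction Huv as [u v [_ [_ Huv]]|u|u w v _ [l1 [? [? ?]]] _ [l2 [? [? ?]]]].
  - exists [u; v]. split; [left; reflexivity|split; [right; left; reflexivity|]].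
    intros a b Ha Hb.
    destruct Ha as [<-|[<-|[]]], Hb as [<-|[<-|[]]];
      try apply rt_refl; apply rt_step; repeat split; simpl; auto using adj_sym.
  - exists [u]. split; [left|split; [left|apply connected_on_singleton]]; reflexivity.
  - exists (l1 ++ l2). split; [apply in_or_app; auto|split; [apply in_or_app; auto|]].
    eapply connected_on_app; eauto.
Qed.

Lemma connected_list_incl (B : list (X + Y)) :
  connected G -> exists l, incl B l /\ connected_on G (fun v => In v l).
Proof.
  intros HG; induction B as [|b B [l [HBl Hl]]].
  - exists []. split; [apply incl_nil_l|intros u v []].
  - destruct l as [|x l].
    + exists [b]. split; [|apply connected_on_singleton].
      apply incl_cons; [left; reflexivity|intros w Hw; destruct (HBl w Hw)].
    + destruct (path_connected_list (HG x b I I)) as [lp [Hx [Hb Hp]]].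
      exists ((x :: l) ++ lp). split.
      * apply incl_cons; [apply in_or_app; auto|].
        apply incl_appl; assumption.
      * apply connected_on_app with x; [assumption|assumption|left; reflexivity|assumption].
Qed.

Lemma twins_in_equiv (S : X + Y -> Prop) : equivalence _ (twins_in G S).
Proof.
  split.
  - intros u w _; reflexivity.
  - intros u v w Huv Hvw z Hz. rewrite (Huv z Hz). apply Hvw, Hz.
  - intros u v Huv z Hz. symmetry. apply Huv, Hz.
Qed.

Lemma twins_in_mono (S S' : X + Y -> Prop) (u v : X + Y) :
  (forall w, S w -> S' w) -> twins_in G S' u v -> twins_in G S u v.
Proof. intros HSS' Huv w Hw. apply Huv, HSS', Hw. Qed.

Lemma twins_in_adj (S : X + Y -> Prop) (u w w' : X + Y) :
  twins_in G S w w' -> S u -> (adj G u w <-> adj G u w').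
Proof.
  intros Hww' Hu. specialize (Hww' u Hu).
  split; intros; apply adj_sym, Hww', adj_sym; assumption.
Qed.

Section TwinQuotient.
Variables (lc r : list (X + Y)).
Let C := fun v => In v lc.
Hypothesis r_incl : incl r lc.
Hypothesis r_covers : forall x, In x lc -> exists y, In y r /\ twins_in G C x y.
Hypothesis r_uniq : forall y1 y2, In y1 r -> In y2 r -> twins_in G C y1 y2 -> y1 = y2.

Lemma twins_in_transversal (u v : X + Y) :
  In u lc -> In v lc -> twins_in G (fun w => In w r) u v -> twins_in G C u v.
Proof.
  intros Hu Hv Huv w Hw.
  destruct (r_covers w Hw) as [w' [Hw' Eww']].
  rewrite (twins_in_adj u Eww' Hu), (twins_in_adj v Eww' Hv).
  apply Huv, Hw'.
Qed.

Lemma transversal_twin_free : twin_free_on G (fun v => In v r).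
Proof.
  intros u v Hu Hv Huv. apply r_uniq; auto.
  apply twins_in_transversal; auto.
Qed.

(* A path in lc projects onto a path in r: a vertex adjacent to x is also
   adjacent to every twin of x. *)
Lemma transversal_connected :
  connected_on G C -> connected_on G (fun v => In v r).
Proof.
  intros Hc.
  assert (Hproj : forall x y, clos_refl_trans_1n _ (restr_adj G C) x y ->
            forall x' y', In x' r -> In y' r -> twins_in G C x x' -> twins_in G C y y' ->
            clos_refl_trans _ (restr_adj G (fun v => In v r)) x' y').
  { destruct (twins_in_equiv C) as [_ Etrans Esym].
    intros x y Hxy; induction Hxy as [x|x z y [Cx [Cz Hxz]] _ IH];
      intros x' y' Hx' Hy' Exx' Eyy'.
    - replace y' with x' by (apply r_uniq; eauto). apply rt_refl.
    - destruct (r_covers z Cz) as [z' [Hz' Ezz']].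
      apply rt_trans with z'; [|apply IH; auto].
      apply rt_step. repeat split; auto.
      apply (twins_in_adj x' Ezz' (r_incl _ Hx')).
      apply adj_sym, (twins_in_adj z Exx' Cz), adj_sym, Hxz. }
  intros u v Hu Hv. apply Hproj with u v; auto; try apply twins_in_equiv.
  apply clos_rt_rt1n, Hc; apply r_incl; assumption.
Qed.

End TwinQuotient.

Lemma separating_vertices (S : X + Y -> Prop) (A : list (X + Y)) :
  is_tf_set G S -> (forall a, In a A -> S a) ->
  exists W, forall a b, In a A -> In b A -> twins_in G (fun w => In w W) a b -> a = b.
Proof.
  intros [_ HS] HAS.
  set (D := fun (p : (X + Y) * (X + Y)) w =>
              fst p = snd p \/ ~ (adj G (fst p) w <-> adj G (snd p) w)).
  destruct (finite_choice_list D (list_prod A A)) as [W HW].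
  - intros [a b] Hab. apply in_prod_iff in Hab as [Ha Hb].
    destruct (classic (a = b)) as [Heq|Hneq]; [exists a; left; assumption|].
    assert (Hnt : ~ twins_in G (fun _ => True) a b) by (intro Ht; apply Hneq, HS; auto).
    apply not_all_ex_not in Hnt as [w Hw].
    exists w. right. intro Hiff. apply Hw. intros _. exact Hiff.
  - exists W. intros a b Ha Hb Hab.
    destruct (HW (a, b) (in_prod A A a b Ha Hb)) as [w [Hw [Heq|Hsep]]]; [assumption|].
    exfalso. apply Hsep, Hab, Hw.
Qed.

Lemma in_F_NoDup_list (S : X + Y -> Prop) (A : list (X + Y)) :
  connected G -> is_tf_set G S -> NoDup A -> (forall a, In a A -> S a) ->
  exists T R, in_F G T /\ length R = length A /\ NoDup R /\ (forall y, In y R -> T y).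
Proof.
  intros HG HS HnA HAS.
  destruct (separating_vertices A HS HAS) as [W HW].
  destruct (connected_list_incl (A ++ W) HG) as [lc [Hlc Hc]].
  pose proof (twins_in_equiv (fun v => In v lc)) as Eequiv.
  destruct (transversal_exists Eequiv lc) as [r [Hrl [Hrep Huniq]]].
  destruct (NoDup_lift_to_transversal Eequiv (fun v => In v r) HnA)
    as [R [HlR [HnR [HRr _]]]]; auto.
  - intros a Ha. apply Hrep, Hlc, in_or_app; auto.
  - intros a b Ha Hb Hab. apply HW; auto.
    apply twins_in_mono with (fun v => In v lc); auto.
    intros w Hw. apply Hlc, in_or_app; auto.
  - exists (fun v => In v r), R. repeat split; auto.
    + exists r. auto.
    + apply transversal_connected with lc; auto.
    + apply transversal_twin_free with lc; auto.
Qed.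

Lemma bip_iso_NoDup_map (S T : X + Y -> Prop) (f : X + Y -> X + Y) (R : list (X + Y)) :
  bip_iso G S T f -> NoDup R -> (forall y, In y R -> S y) ->
  NoDup (map f R) /\ (forall z, In z (map f R) -> T z).
Proof.
  intros [Hmap [Hinj _]] HnR HRS. split.
  - apply NoDup_map_NoDup_ForallPairs; [intros a b Ha Hb; apply Hinj; auto|assumption].
  - intros z Hz. apply in_map_iff in Hz as [y [<- Hy]]. auto.
Qed.

Lemma finite_sets_NoDup_bound (L : list (X + Y -> Prop)) :
  Forall (@finite_set X Y) L ->
  exists N, forall T, In T L -> forall l, NoDup l -> (forall x, In x l -> T x) -> length l <= N.
Proof.
  induction 1 as [|T L [lT HlT] _ [N HN]].
  - exists 0. intros _ [].
  - exists (length lT + N). intros T' [<-|HT'] l Hnl Hl.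
    + enough (length l <= length lT) by lia.
      apply NoDup_incl_length; [assumption|intros x Hx; apply HlT, Hl, Hx].
    + specialize (HN T' HT' l Hnl Hl). lia.
Qed.

Lemma not_finite_set_NoDup (S : X + Y -> Prop) :
  ~ finite_set S -> forall n, exists l, length l = n /\ NoDup l /\ (forall x, In x l -> S x).
Proof.
  intros Hinf n; induction n as [|n [l [Hl [Hnl HlS]]]].
  - exists []. repeat split; [constructor|intros _ []].
  - assert (Hfresh : exists v, S v /\ ~ In v l).
    { apply NNPP; intro Hno. apply Hinf. exists l. intros v Sv.
      apply NNPP; intro Hv. apply Hno; eauto. }
    destruct Hfresh as [v [Sv Hv]].
    exists (v :: l). repeat split; [simpl; congruence|constructor; auto|].
    intros x [<-|Hx]; auto.
Qed.

End Bipartite.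

Theorem lemma2p5 (X Y : Type) (G : X -> Y -> Prop) :
  connected G ->
  (exists L : list (X + Y -> Prop),
      Forall (in_F G) L /\
      (forall S, in_F G S -> exists T, In T L /\ isomorphic G S T)) ->
  forall S, is_tf_set G S -> finite_set S.
Proof.
  intros HG [L [HL Hiso]] S HS.
  assert (HLfin : Forall (@finite_set X Y) L) by (apply Forall_impl with (in_F G); [intros T []|]; auto).
  destruct (finite_sets_NoDup_bound HLfin) as [N HN].
  apply NNPP; intro Hinf.
  destruct (not_finite_set_NoDup Hinf (1 + N)) as [A [HlA [HnA HAS]]].
  destruct (in_F_NoDup_list HG HS HnA HAS) as [T [R [HT [HlR [HnR HRT]]]]].
  destruct (Hiso T HT) as [T' [HT' [f Hf]]].
  destruct (bip_iso_NoDup_map Hf HnR HRT) as [Hnf HfT'].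
  specialize (HN T' HT' (map f R) Hnf HfT').
  rewrite length_map in HN. lia.
Qed.
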